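(* Let $p$ be a prime, $q=p^m$, $1\le r<p$, and enumerate $\mathbb{F}_q^*=\{\alpha_1,\dots,\alpha_{q-1}\}$. Let $\mathcal{G}=(\mathbb{F}_q[T]/(T^{r+1}))^*/\mathbb{F}_q^*$; every non-identity element has order $p$, so $\mathcal{G}$ is an $\mathbb{F}_p$-vector space of dimension $rm$. For $I=\{i_1,\dots,i_t\}\subseteq\{1,\dots,q-1\}$, the subgroup ($\mathbb{F}_p$-subspace) of $\mathcal{G}$ generated by the classes of $1+\alpha_iT$, $i\in I$, has $\mathbb{F}_p$-dimension $rm$ if and only if the matrix $$G_I=\begin{pmatrix}\alpha_{i_1}&\cdots&\alpha_{i_t}\\ \alpha_{i_1}^2&\cdots&\alpha_{i_t}^2\\ \vdots&&\vdots\\ \alpha_{i_1}^r&\cdots&\alpha_{i_t}^r\end{pmatrix}\in\mathbb{F}_p^{rm\times t}$$ has rank $rm$ over $\mathbb{F}_p$, where each entry $\alpha_i^k$ is replaced by its coordinate column vector in $\mathbb{F}_p^m$ with respect to a fixed $\mathbb{F}_p$-basis of $\mathbb{F}_q$.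
   Context: $T$ is an indeterminate over $\mathbb{F}_q$; $\mathbb{F}_q^*$ denotes the image of the nonzero constants in $(\mathbb{F}_q[T]/(T^{r+1}))^*$. *)

From HB Require Import structures.
From mathcomp Require Import all_boot all_algebra all_fingroup.
Set Implicit Arguments. Unset Strict Implicit. Unset Printing Implicit Defensive.
Import GRing.Theory.
Local Open Scope ring_scope.

Definition truncmod (F : finFieldType) (r : nat) : {poly F} := 'X^(r.+1).

Definition truncring (F : finFieldType) (r : nat) := {poly %/ (truncmod F r)}.
HB.instance Definition _ F r := GRing.ComUnitRing.on (truncring F r).
HB.instance Definition _ F r := Finite.on (truncring F r).

Definition tclass (F : finFieldType) (r : nat) (P : {poly F}) : truncring F r :=
  in_qpoly (truncmod F r) P.

Definition const_units (F : finFieldType) (r : nat) : {set {unit truncring F r}} :=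
  [set u | [exists c : F, val u == tclass r c%:P]].

Definition Ggroup (F : finFieldType) (r : nat) := coset_of (const_units F r).

Definition gen_subgroup (F : finFieldType) (r : nat) (n : nat)
    (a : 'I_n -> F) (I : {set 'I_n}) : {group Ggroup F r} :=
  <<[set coset (const_units F r) u | u : {unit truncring F r} &
          [exists i in I, val u == tclass r (1 + (a i)%:P * 'X)]]>>%G.

Definition expand (p : nat) (F : finFieldType) (m : nat) (b : 'I_m -> F)
    (c : 'rV['F_p]_m) : F :=
  \sum_(j < m) (nat_of_ord (c 0 j))%:R * b j.

(* j-th entry of a row vector (0 if out of range). *)
Definition rv_nth (K : nzRingType) (m : nat) (v : 'rV[K]_m) (j : nat) : K :=
  if insub j is Some j' then v 0 j' else 0.

(* The matrix G_I in F_p^{rm x t}: the row block k (k = 1..r) consists of the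
   coordinate columns of a_{i_s}^k, i.e. row (k-1)*m + j, column s holds the
   j-th coordinate of a_{i_s}^k; columns are indexed by the elements of I
   (enumerated in increasing order). *)
Definition GI_matrix (p : nat) (F : finFieldType) (m r n : nat)
    (coord : F -> 'rV['F_p]_m) (a : 'I_n -> F) (I : {set 'I_n})
    : 'M['F_p]_(r * m, #|I|) :=
  \matrix_(i < r * m, s < #|I|)
     rv_nth (coord (a (enum_val s) ^+ (i %/ m).+1)) (i %% m).

From HB Require Import structures.
From mathcomp Require Import all_boot all_algebra all_fingroup zify ring mxabelem.
Set Implicit Arguments. Unset Strict Implicit. Unset Printing Implicit Defensive.
Import GRing.Theory FinRing.Theory.
Local Open Scope group_scope.
Local Open Scope ring_scope.

(* We prove the sharper statement  logn p #|<1 + a_i T : i in I>| = rank G_I,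
   from which the equivalence follows at once.
   The tool is the truncated logarithmic derivative: for a unit u of
   A = F[T]/(T^(r+1)), the polynomial u'/u modulo T^r.
   - It turns products into sums, so it is a homomorphism from A^* to the
     additive group F[T]/(T^r).
   - Its kernel is exactly the constants F^*: u' = 0 modulo T^r forces u to be
     constant because the exponents 1..r are nonzero in F, as r < p.
   - On 1 + aT it equals a/(1 + aT) = sum_k a (-a)^k T^k.
   Twisting the k-th coefficient by (-1)^k and taking coordinates in the basis
   b gives an injective homomorphism from G = A^*/F^* into F_p^(rm), sending
   the class of 1 + a_i T to the corresponding column of G_I.  Hence the
   subgroup generated by these classes is isomorphic to the column space of
   G_I, which has p^(rank G_I) elements. *)

Section TruncatedAgreement.
Variable R : comNzRingType.

Definition eqlow n (P Q : {poly R}) := forall k, (k < n)%N -> P`_k = Q`_k.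

Lemma eqlow_sym n P Q : eqlow n P Q -> eqlow n Q P.
Proof. by move=> h k hk; rewrite h. Qed.

Lemma eqlow_trans n P Q S : eqlow n P Q -> eqlow n Q S -> eqlow n P S.
Proof. by move=> h1 h2 k hk; rewrite h1 ?h2. Qed.

Lemma eqlowW n n' P Q : (n <= n')%N -> eqlow n' P Q -> eqlow n P Q.
Proof. by move=> hn h k hk; rewrite h // (leq_trans hk hn). Qed.

Lemma eqlowD n P P' Q Q' :
  eqlow n P P' -> eqlow n Q Q' -> eqlow n (P + Q) (P' + Q').
Proof. by move=> h1 h2 k hk; rewrite !coefD h1 ?h2. Qed.

(* The coefficient of X^k in a product only involves coefficients of index <= k. *)
Lemma eqlowM n P P' Q Q' :
  eqlow n P P' -> eqlow n Q Q' -> eqlow n (P * Q) (P' * Q').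
Proof.
move=> h1 h2 k hk; rewrite !coefM; apply: eq_bigr => i _.
have hi := ltn_ord i.
by rewrite h1 ?h2 //; lia.
Qed.

Lemma eqlow_deriv n P Q : eqlow n.+1 P Q -> eqlow n P^`() Q^`().
Proof. by move=> h k hk; rewrite !coef_deriv h. Qed.

Lemma eqlow_rmodp n P : eqlow n (Pdiv.Ring.rmodp P 'X^n) P.
Proof.
move=> k hk.
by rewrite {2}(Pdiv.RingMonic.rdivp_eq (monicXn R n) P) coefD coefMXn hk add0r.
Qed.
End TruncatedAgreement.

Section AdditiveMorphism.
Variables (gT : finGroupType) (V : zmodType) (f : gT -> V).
Hypothesis fM : forall x y, f (x * y)%g = f x + f y.

Lemma amorph1 : f 1%g = 0.
Proof. by apply: (addrI (f 1%g)); rewrite addr0 -fM mulg1. Qed.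

Lemma amorphV x : f x^-1%g = - f x.
Proof. by apply/eqP; rewrite -addr_eq0 addrC -fM mulgV amorph1. Qed.

Lemma amorphX x n : f (x ^+ n)%g = f x *+ n.
Proof. by elim: n => [|n IH]; rewrite ?expg0 ?amorph1 // expgS fM IH mulrS. Qed.

Lemma amorph_prod n (c : 'I_n -> gT) : f (\prod_(i < n) c i)%g = \sum_(i < n) f (c i).
Proof. exact: (big_morph f fM amorph1). Qed.
End AdditiveMorphism.

Section TruncatedRing.
Variables (F : finFieldType) (r : nat).
Local Notation A := (truncring F r).
Local Notation U := {unit truncring F r}.

Definition rep (x : A) : {poly F} := val x.

Lemma truncmod_monic : mk_monic (truncmod F r) = 'X^(r.+1).
Proof. exact: mk_monic_Xn. Qed.

Lemma rep_mul x y : eqlow r.+1 (rep (x * y)) (rep x * rep y).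
Proof. by have := @eqlow_rmodp _ r.+1 (rep x * rep y); rewrite -truncmod_monic. Qed.

Lemma rep1 : rep 1 = 1.
Proof. exact: (qpolyCE _ 1). Qed.

Lemma size_rep x : (size (rep x) <= r.+1)%N.
Proof.
have h : (size (rep x) < size (mk_monic (truncmod F r)))%N := size_mk_monic x.
by rewrite truncmod_monic size_polyXn in h.
Qed.

Lemma rep_tclass (P : {poly F}) : (size P <= r.+1)%N -> rep (tclass r P) = P.
Proof. by move=> hP; apply: in_qpoly_small; rewrite truncmod_monic size_polyXn. Qed.

Lemma rep_tclassC (c : F) : rep (tclass r c%:P) = c%:P.
Proof. by rewrite rep_tclass // size_polyC; case: (_ != 0). Qed.

Definition urep (u : U) := rep (val u).
Definition urepV (u : U) := rep (val u^-1%g).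

Lemma urep_mulV u : eqlow r.+1 (urep u * urepV u) 1.
Proof.
apply: eqlow_trans (eqlow_sym (rep_mul _ _)) _.
by rewrite /= mulrV ?rep1 //; apply: (valP u).
Qed.

(* The logarithmic derivative u'/u, meaningful modulo X^r. *)
Definition dlog (u : U) := (urep u)^`() * urepV u.

Lemma dlogM u w : eqlow r (dlog (u * w)%g) (dlog u + dlog w).
Proof.
have hM : eqlow r.+1 (urep (u * w)%g) (urep u * urep w).
  by rewrite /urep val_unitM; apply: rep_mul.
have hV : eqlow r.+1 (urepV (u * w)%g) (urepV w * urepV u).
  by rewrite /urepV invMg val_unitM; apply: rep_mul.
apply: (@eqlow_trans _ _ _ ((urep u * urep w)^`() * (urepV w * urepV u))).
  by apply: eqlowM; [apply: eqlow_deriv | apply: eqlowW hV].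
have -> : (urep u * urep w)^`() * (urepV w * urepV u) =
    dlog u * (urep w * urepV w) + dlog w * (urep u * urepV u).
  by rewrite /dlog derivM; ring.
rewrite -[X in eqlow _ _ (X + _)]mulr1 -[X in eqlow _ _ (_ + X)]mulr1.
by apply: eqlowD; apply: eqlowM => //; apply: eqlowW (urep_mulV _).
Qed.

Lemma dlog_const u c : val u = tclass r c%:P -> dlog u = 0.
Proof. by move=> h; rewrite /dlog /urep h rep_tclassC derivC mul0r. Qed.

(* When r < p = char F, a unit with vanishing logarithmic derivative is a
   constant: u' = (u'/u) u vanishes mod X^r, and k a_k = 0 with 0 < k <= r < p
   forces a_k = 0. *)
Lemma dlog_ker (p : nat) u : p \in [pchar F] -> (r < p)%N ->
  eqlow r (dlog u) 0 -> val u = tclass r ((urep u)`_0)%:P.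
Proof.
move=> pF rp hD.
have hder : eqlow r (urep u)^`() 0.
  apply: (@eqlow_trans _ _ _ (dlog u * urep u)).
    have -> : dlog u * urep u = (urep u)^`() * (urep u * urepV u) by rewrite /dlog; ring.
    rewrite -[X in eqlow _ X _]mulr1; apply: eqlowM => //.
    exact: eqlow_sym (eqlowW (leqnSn _) (urep_mulV _)).
  by rewrite -(mul0r (urep u)); apply: eqlowM.
apply: val_inj; rewrite -[RHS]/(rep _) rep_tclassC.
apply/polyP => -[|k]; rewrite coefC //=.
have [kr|kr] := ltnP k r; last first.
  by apply: nth_default; apply: leq_trans (size_rep (val u)) _.
have /eqP := hder k kr; rewrite coef_deriv coef0 -mulr_natr mulf_eq0.
case/orP=> [/eqP //|]; rewrite -(dvdn_pcharf pF) => /(dvdn_leq (ltn0Sn _)).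
by lia.
Qed.

Lemma size_gen (a : F) : (size ((1 + a%:P * 'X)%R : {poly F}) <= 2)%N.
Proof.
apply: leq_trans (size_polyD _ _) _; rewrite size_polyC oner_eq0 geq_max /=.
apply: leq_trans (size_polyMleq _ _) _.
by rewrite size_polyX size_polyC; case: (a != 0).
Qed.

(* 1 + aT is a unit of A (its constant term is 1). *)
Lemma gen_unit (a : F) : (1 <= r)%N -> tclass r (1 + a%:P * 'X) \is a GRing.unit.
Proof.
move=> r1; rewrite qualifE /= truncmod_monic coprimep_expl // coprimep_sym coprimepX.
rewrite Pdiv.Ring.rmodp_small; last first.
  by rewrite size_polyXn; apply: leq_ltn_trans (size_gen a) _; lia.
by rewrite rootE !hornerE oner_eq0.
Qed.

(* The inverse of 1 + aT is sum_k (-a)^k T^k, so its logarithmic derivative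
   is sum_k a (-a)^k T^k. *)
Lemma dlog_gen u (a : F) : (1 <= r)%N -> val u = tclass r (1 + a%:P * 'X) ->
  forall k, (k < r)%N -> (dlog u)`_k = a * (- a) ^+ k.
Proof.
move=> r1 h.
have hA : urep u = 1 + a%:P * 'X.
  by rewrite /urep h rep_tclass //; apply: leq_trans (size_gen a) _.
have hV : forall k, (k <= r)%N -> (urepV u)`_k = (- a) ^+ k.
  have hrec k : (k < r.+1)%N ->
      (urepV u)`_k + a * (if k == 0%N then 0 else (urepV u)`_k.-1) = (k == 0%N)%:R.
    move=> hk; have := urep_mulV u hk.
    by rewrite hA mulrDl mul1r -mulrA coefD coefCM coefXM coef1.
  elim=> [|k IH] hk; first by have := hrec 0%N isT; rewrite mulr0 addr0.
  move/eqP: (hrec k.+1 hk); rewrite /= IH 1?ltnW // addr_eq0 => /eqP ->.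
  by rewrite exprS mulNr.
move=> k hk; rewrite /dlog hA derivD derivC add0r derivM derivC mul0r add0r.
by rewrite derivX mulr1 coefCM hV 1?ltnW.
Qed.
End TruncatedRing.

Section Coordinates.
Variables (p m : nat) (F : finFieldType) (b : 'I_m -> F) (coord : F -> 'rV['F_p]_m).
Hypotheses (pp : prime p) (pF : p \in [pchar F]).
Hypotheses (cK : cancel coord (expand b)) (eK : cancel (expand b) coord).

Lemma natr_modp n : ((n %% p)%:R : F) = n%:R.
Proof. by rewrite {2}(divn_eq n p) natrD natrM (pcharf0 pF) mulr0 add0r. Qed.

Lemma expandD (c d : 'rV['F_p]_m) : expand b (c + d) = expand b c + expand b d.
Proof.
rewrite /expand -big_split /=; apply: eq_bigr => j _.
rewrite -mulrDl -natrD mxE /=.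
move: (nat_of_ord (c 0%R j) + nat_of_ord (d 0%R j))%N => n.
by rewrite (Fp_cast pp) natr_modp.
Qed.

Lemma expand0 : expand b (0 : 'rV['F_p]_m) = 0.
Proof. by rewrite /expand big1 // => j _; rewrite mxE mul0r. Qed.

Lemma coordD x y : coord (x + y) = coord x + coord y.
Proof. by rewrite -{1}(cK x) -{1}(cK y) -expandD eK. Qed.

Lemma coord0 : coord 0 = 0.
Proof. by rewrite -expand0 eK. Qed.

Lemma coord_eq0 x : coord x = 0 -> x = 0.
Proof. by move=> h; rewrite -(cK x) h expand0. Qed.
End Coordinates.

Lemma rv_nthD (K : nzRingType) n (v w : 'rV[K]_n) j :
  rv_nth (v + w) j = rv_nth v j + rv_nth w j.
Proof. by rewrite /rv_nth; case: insub => [j'|]; rewrite ?mxE ?addr0. Qed.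

Lemma rv_nth0 (K : nzRingType) n j : rv_nth (0 : 'rV[K]_n) j = 0.
Proof. by rewrite /rv_nth; case: insub => [j'|]; rewrite ?mxE. Qed.

(* Block indexing of 'I_(r * m): the entry (k, j) sits at k * m + j. *)
Lemma block_div_lt r m (i : 'I_(r * m)) : (i %/ m < r)%N.
Proof.
move: (nat_of_ord i) (ltn_ord i) => k hk.
have hm : (0 < m)%N by case: (posnP m) hk => // ->; rewrite muln0.
by rewrite ltn_divLR.
Qed.

Lemma block_lt r m k j : (k < r)%N -> (j < m)%N -> (k * m + j < r * m)%N.
Proof. by move=> hk hj; nia. Qed.

Section LogCoordinates.
Variables (p m r : nat) (F : finFieldType) (b : 'I_m -> F) (coord : F -> 'rV['F_p]_m).
Hypotheses (pp : prime p) (pF : p \in [pchar F]) (r1 : (1 <= r)%N) (rp : (r < p)%N).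
Hypotheses (cK : cancel coord (expand b)) (eK : cancel (expand b) coord).
Local Notation U := {unit truncring F r}.
Local Notation K := (const_units F r).

Definition dlogv (u : U) : 'rV['F_p]_(r * m) :=
  \row_(i < r * m) rv_nth (coord ((-1) ^+ (i %/ m) * (dlog u)`_(i %/ m))) (i %% m).

Lemma dlogv_block u k (j : 'I_m) (hk : (k < r)%N) :
  dlogv u 0 (Ordinal (block_lt hk (ltn_ord j))) = coord ((-1) ^+ k * (dlog u)`_k) 0 j.
Proof.
have hm : (0 < m)%N := leq_ltn_trans (leq0n _) (ltn_ord j).
rewrite mxE /= divnMDl // divn_small // addn0 modnMDl modn_small //.
by rewrite /rv_nth insubT //= => hj; congr (coord _ 0 _); apply: val_inj.
Qed.

Lemma dlogvM u w : dlogv (u * w)%g = dlogv u + dlogv w.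
Proof.
apply/rowP => i; rewrite !mxE -rv_nthD -(coordD pp pF cK eK) -mulrDr -coefD.
by rewrite (dlogM u w (block_div_lt i)).
Qed.

Lemma dlogv_const u c : val u = tclass r c%:P -> dlogv u = 0.
Proof.
move=> h; apply/rowP => i.
by rewrite !mxE (dlog_const h) coef0 mulr0 (coord0 eK) rv_nth0.
Qed.

Lemma dlogv_ker u : dlogv u = 0 -> u \in K.
Proof.
move=> h; rewrite inE; apply/existsP; exists ((urep u)`_0); apply/eqP.
apply: (dlog_ker pF rp) => k hk; rewrite coef0.
have hc : coord ((-1) ^+ k * (dlog u)`_k) = 0.
  by apply/rowP => j; rewrite -dlogv_block h !mxE.
by move/eqP: (coord_eq0 cK hc); rewrite mulf_eq0 signr_eq0 => /eqP.
Qed.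

Lemma dlogv_gen (n : nat) (alpha : 'I_n -> F) (I : {set 'I_n}) u (s : 'I_#|I|) :
  val u = tclass r (1 + (alpha (enum_val s))%:P * 'X) ->
  dlogv u = row s (GI_matrix r coord alpha I)^T.
Proof.
move=> h; apply/rowP => i; rewrite !mxE (dlog_gen r1 h (block_div_lt i)).
congr (rv_nth (coord _) _); set a := alpha _; set k := (i %/ m)%N.
have sign2 : (-1) ^+ k * (-1) ^+ k = 1 :> F by rewrite -exprMn mulrNN mulr1 expr1n.
rewrite (exprNn a k) exprS.
by transitivity (((-1) ^+ k * (-1) ^+ k) * (a * a ^+ k)); [ring | rewrite sign2 mul1r].
Qed.

(* A^* is commutative, so everything normalises the constants. *)
Lemma norm_const (u : U) : u \in 'N(K).
Proof.
apply: (subsetP (cent_sub _)); apply/centP => y _.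
by apply: val_inj; rewrite !val_unitM mulrC.
Qed.

Lemma mem_gen_const u : (u \in <<K>>) = (dlogv u == 0).
Proof.
apply/idP/eqP; last by move/dlogv_ker; apply: mem_gen.
case/gen_prodgP=> n [c hc ->]; rewrite (amorph_prod dlogvM) big1 // => i _.
by move: (hc i); rewrite inE => /existsP[c0 /eqP]; apply: dlogv_const.
Qed.

Lemma coset_eqE u w : (coset K u == coset K w) = (dlogv u == dlogv w).
Proof.
rewrite -val_eqE /= !val_coset_prim ?norm_const //.
have hmem : (u \in <<K>> :* w) = (dlogv u == dlogv w).
  by rewrite mem_rcoset mem_gen_const dlogvM (amorphV dlogvM) subr_eq0.
apply/eqP/idP => [h | h]; first by rewrite -hmem -h rcoset_refl.
by apply/rcoset_eqP; rewrite hmem.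
Qed.

Definition dlogG (C : Ggroup F r) := dlogv (repr C).

Lemma dlogG_coset u : dlogG (coset K u) = dlogv u.
Proof. by apply/eqP; rewrite -coset_eqE coset_reprK. Qed.

Lemma dlogG_inj : injective dlogG.
Proof.
move=> C D h; rewrite -(coset_reprK C) -(coset_reprK D).
by apply/eqP; rewrite coset_eqE; apply/eqP.
Qed.

Lemma dlogGM (C D : Ggroup F r) : dlogG (C * D)%g = dlogG C + dlogG D.
Proof.
rewrite -(coset_reprK C) -(coset_reprK D) -coset_morphM ?norm_const //.
by rewrite !dlogG_coset dlogvM.
Qed.

Lemma im_gen_subgroup (n : nat) (alpha : 'I_n -> F) (I : {set 'I_n}) :
  dlogG @: (gen_subgroup r alpha I : {set Ggroup F r}) =
  rowg (GI_matrix r coord alpha I)^T.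
Proof.
apply/setP => v; apply/imsetP/idP.
  case=> C /gen_prodgP[k [c hc ->]] ->.
  rewrite (amorph_prod dlogGM) inE; apply: summx_sub => i _.
  case/imsetP: (hc i) => u; rewrite inE => /existsP[j /andP[jI /eqP hu]] ->.
  rewrite dlogG_coset (@dlogv_gen _ alpha I u (enum_rank_in jI j)) ?row_sub //.
  by rewrite enum_rankK_in.
rewrite inE => /submxP[D ->].
pose gen (s : 'I_#|I|) : U := FinRing.Unit (gen_unit (alpha (enum_val s)) r1).
exists (\prod_(s < #|I|) coset K (gen s) ^+ (D 0 s))%g.
  apply: group_prod => s _; apply/groupX/mem_gen/imsetP.
  by exists (gen s) => //; rewrite inE; apply/existsP; exists (enum_val s); rewrite enum_valP /=.
rewrite (amorph_prod dlogGM) mulmx_sum_row; apply: eq_bigr => s _.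
rewrite (amorphX dlogGM) dlogG_coset (@dlogv_gen _ alpha I _ s) //.
by rewrite -scaler_nat natr_Zp.
Qed.

Lemma logn_card_gen_subgroup (n : nat) (alpha : 'I_n -> F) (I : {set 'I_n}) :
  logn p #|gen_subgroup r alpha I| = \rank (GI_matrix r coord alpha I).
Proof.
rewrite -(card_imset _ dlogG_inj) im_gen_subgroup card_rowg card_Fp // mxrank_tr.
exact: pfactorK.
Qed.
End LogCoordinates.

Theorem lemma4p1 (p m r : nat) (F : finFieldType)
    (b : 'I_m -> F) (coord : F -> 'rV['F_p]_m)
    (alpha : 'I_(p ^ m - 1) -> F) (I : {set 'I_(p ^ m - 1)}) :
  prime p -> p \in [pchar F] -> #|F| = (p ^ m)%N ->
  (1 <= r)%N -> (r < p)%N ->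
  (* b is an F_p-basis of F, and coord gives coordinates w.r.t. b *)
  cancel coord (expand b) -> cancel (expand b) coord ->
  (* alpha enumerates F^* *)
  injective alpha -> (forall i, alpha i != 0) ->
  logn p #|gen_subgroup r alpha I| = (r * m)%N <->
  \rank (GI_matrix r coord alpha I) = (r * m)%N.
Proof.
move=> pp pF _ r1 rp cK eK _ _.
by rewrite (logn_card_gen_subgroup pp pF r1 rp cK eK).
Qed.
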